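(* Let $X=\{X(t):t\ge0\}$ be an $H$-self-similar process ($H>0$) with cadlag paths, let $0<T<\infty$, and assume the density $f(1,\cdot)$ of $X(1)$ is strictly positive. Let $X_1,X_2,\dots$ be i.i.d. copies of $X$ with cadlag paths on a complete probability space, and for $n\ge1$ let $\tau^n_\alpha(t)$ be the empirical quantile process built from $X_1,\dots,X_n$. Fix $\alpha^*\in(\frac12,1)$, let $A=[1-\alpha^*,\alpha^*]$, $A_{\mathbb Q}=A\cap\mathbb Q$, and $[0,T]_{\mathbb Q}=([0,T]\cap\mathbb Q)\cup\{T\}$. Then, for each $n\ge1$: with probability one, $t\mapsto\tau^n_\alpha(t)$ is right continuous on $[0,T)$ (for every $\alpha$); $$P\Big(\sup_{t\in[0,T],\alpha\in A}|\tau^n_\alpha(t)-\tau_\alpha(t)|=\sup_{t\in[0,T]_{\mathbb Q},\alpha\in A_{\mathbb Q}}|\tau^n_\alpha(t)-\tau_\alpha(t)|\Big)=1;$$ with probability one $\tau^n_\alpha(\cdot)$ has left limits at every $t\in(0,T]$; and if the paths of $X$ (and of the $X_j$) are continuous, then with probability one $\tau^n_\alpha(\cdot)$ is continuous on $[0,T]$. Moreover, for each $t\in[0,T]$ and $n\ge1$, with probability one $\alpha\mapsto\tau^n_\alpha(t)$ is left continuous and has right limits on $(0,1)$.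
   Context: $H$-self-similar: for all $c>0$, $\{X(ct)\}_{t\ge0}$ and $\{c^HX(t)\}_{t\ge0}$ have the same finite-dimensional distributions. Notation: $F(t,x)=P(X(t)\le x)$, $F_n(t,x)=\frac1n\sum_{i=1}^nI(X_i(t)\le x)$, $\tau_\alpha(t)=\inf\{x:F(t,x)\ge\alpha\}$, $\tau^n_\alpha(t)=\inf\{x:F_n(t,x)\ge\alpha\}$. *)

From HB Require Import structures.
From mathcomp Require Import all_boot all_order all_algebra.
From mathcomp Require Import all_classical all_reals all_analysis.
Set Implicit Arguments. Unset Strict Implicit. Unset Printing Implicit Defensive.
Import Order.TTheory GRing.Theory Num.Theory.
Import numFieldNormedType.Exports.
Local Open Scope classical_set_scope.
Local Open Scope ring_scope.

Section defs.
Context {R : realType}.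

Definition is_rat (x : R) : Prop := exists q : rat, x = ratr q.

(* Cylinder (finite-dimensional) event {X(t_1)<=x_1, ..., X(t_k)<=x_k}
   for s = [:: (t_1,x_1); ...; (t_k,x_k)]. *)
Definition cyl {Om : Type} (X : R -> Om -> R) (s : seq (R * R)) : set Om :=
  [set w | all (fun p => X p.1 w <= p.2) s].

Definition times_nonneg (s : seq (R * R)) : bool := all (fun p => 0 <= p.1) s.

Context {d : measure_display} {Om : measurableType d} (P : probability Om R).

Definition is_process (X : R -> Om -> R) : Prop :=
  forall t, 0 <= t -> measurable_fun setT (X t).

(* H-self-similarity: {X(ct)} and {c^H X(t)} have the same finite-dimensional
   distributions (expressed through joint distribution functions). *)
Definition self_similar (H : R) (X : R -> Om -> R) : Prop :=
  forall c : R, 0 < c -> forall s : seq (R * R), times_nonneg s ->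
    P (cyl (fun t => X (c * t)) s) = P (cyl (fun t w => c `^ H * X t w) s).

Definition cadlag_paths (X : R -> Om -> R) : Prop :=
  forall w, (forall t, 0 <= t -> X^~ w x @[x --> t^'+] --> X t w) /\
            (forall t, 0 < t -> cvg (X^~ w x @[x --> t^'-])).

Definition continuous_paths (X : R -> Om -> R) : Prop :=
  forall w, {within `[0, +oo[, continuous (X^~ w)}.

Definition distF (X : R -> Om -> R) (t x : R) : R :=
  fine (P [set w | X t w <= x]).

Definition quantile (X : R -> Om -> R) (alpha t : R) : R :=
  inf [set x | alpha <= distF X t x].

End defs.

(* Empirical distribution function F_n(t,x) built from the copies
   Xs 0, ..., Xs (n-1), and empirical quantile tau^n_alpha(t). *)
Definition empF {R : realType} {Om : Type} (Xs : nat -> R -> Om -> R)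
  (n : nat) (t x : R) (w : Om) : R :=
  n%:R^-1 * \sum_(i < n) (if Xs i t w <= x then 1 else 0).

Definition empQ {R : realType} {Om : Type} (Xs : nat -> R -> Om -> R)
  (n : nat) (alpha t : R) (w : Om) : R :=
  inf [set x | alpha <= empF Xs n t x w].

Definition same_fdd {R : realType} {d0 d : measure_display}
  {Om0 : measurableType d0} {Om : measurableType d}
  (P0 : probability Om0 R) (X : R -> Om0 -> R)
  (P : probability Om R) (Y : R -> Om -> R) : Prop :=
  forall s : seq (R * R), times_nonneg s -> P (cyl Y s) = P0 (cyl X s).

(* mutual independence of the processes Xs i, i in nat: product rule on the
   generating pi-system of finite-dimensional cylinder events. *)
Definition indep_processes {R : realType} {d : measure_display}
  {Om : measurableType d} (P : probability Om R) (Xs : nat -> R -> Om -> R) :=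
  forall (I : seq nat) (s : nat -> seq (R * R)), uniq I ->
    (forall i, times_nonneg (s i)) ->
    fine (P [set w | forall i, i \in I -> cyl (Xs i) (s i) w]) =
    \prod_(i <- I) fine (P (cyl (Xs i) (s i))).

Definition pos_density_at1 {R : realType} {d0 : measure_display}
  {Om0 : measurableType d0} (P0 : probability Om0 R) (X : R -> Om0 -> R) :=
  exists f : R -> R, measurable_fun setT f /\ (forall x, 0 < f x) /\
    forall x, P0 [set w | X 1 w <= x] =
              (\int[lebesgue_measure]_(y in `]-oo, x]) (f y)%:E)%E.

From HB Require Import structures.
From mathcomp Require Import all_boot all_order all_algebra.
From mathcomp Require Import all_classical all_reals all_analysis.
From mathcomp Require Import lra measurable_realfun.
Import Order.TTheory GRing.Theory Num.Theory.
Import numFieldNormedType.Exports.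
Local Open Scope classical_set_scope.
Local Open Scope ring_scope.
Set Implicit Arguments. Unset Strict Implicit. Unset Printing Implicit Defensive.

(* The empirical quantile at time t is the quantile of the finite sample
   (X_1(t), ..., X_n(t)).  For a level in (0, 1] it depends continuously on the
   sample, and as a function of the level it is a step function that can only
   jump at the grid points j/n; so the path regularity of the X_i (cadlag or
   continuous) passes to t |-> tau^n_alpha(t), and alpha |-> tau^n_alpha(t) is
   left continuous with right limits.  For the supremum, self-similarity gives
   tau_alpha(t) = t^H tau_alpha(1), and alpha |-> tau_alpha(1) is continuous
   because F(1, .) is strictly increasing (positive density).  Hence
   |tau^n_alpha(t) - tau_alpha(t)| is right continuous in t and, at irrational
   alpha (where tau^n is locally constant in alpha), continuous in alpha; so
   each of its values is a limit of values at points of [0,T]_Q x A_Q and the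
   two suprema coincide.  All of this holds for every sample path, so the
   almost-sure statements hold surely. *)

Section real_line.
Variable R : realType.

Lemma powR_cvg_right (H t : R) : 0 < H -> 0 <= t -> s `^ H @[s --> t^'+] --> t `^ H.
Proof.
move=> H_gt0; rewrite le_eqVlt => /orP[/eqP<-|t_gt0].
  by rewrite powR0 ?gt_eqF//; exact: powR_cvg0.
have t_pos : t \in `]0, +oo[ by rewrite in_itv/= t_gt0.
have powR_cont : {for t, continuous (fun s : R => s `^ H)}.
  apply: differentiable_continuous.
  exact: (derivable1_diffP _ _).1 (@derivable_powR R 1 H t t_pos).
exact: cvg_at_right_filter powR_cont.
Qed.

Lemma is_rat_ratio (j k : nat) : is_rat (j%:R / k%:R : R).
Proof. by exists (j%:R / k%:R); rewrite fmorph_div /= !rmorph_nat. Qed.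

Lemma near_right_rat (t : R) (P : R -> Prop) :
  (\forall s \near t^'+, P s) -> exists q : rat, t < ratr q /\ P (ratr q).
Proof.
move=> /nbhs_ballP[e /= e_gt0 tP].
have [q] := @rat_in_itvoo R t (t + e) (ltac:(by rewrite ltrDl)).
rewrite in_itv/= => /andP[tq qte].
exists q; split=> //; apply: tP => //.
by rewrite /ball/= ltr_distlC; apply/andP; split; lra.
Qed.

Lemma near_rat_itv (a lo hi : R) (P : R -> Prop) : lo < hi -> lo <= a <= hi ->
  (\forall b \near a, P b) -> exists q : rat, lo <= ratr q <= hi /\ P (ratr q).
Proof.
move=> lo_hi /andP[lo_a a_hi] /nbhs_ballP[e /= e_gt0 aP].
have itv_ne : Num.max (a - e) lo < Num.min (a + e) hi.
  by rewrite lt_min !gt_max lo_hi andbT -andbA; apply/and3P; split; lra.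
have [q] := rat_in_itvoo itv_ne.
rewrite in_itv/= lt_min !gt_max => /andP[/andP[aeq loq] /andP[qae qhi]].
exists q; split; first by rewrite !ltW.
by apply: aP; rewrite /ball/= ltr_distlC; apply/andP; split; lra.
Qed.

Lemma near_left_le (a g : R) : \forall b \near a^'-, (b <= g) = (a <= g).
Proof.
have [ag|ga] := leP a g.
  by near=> b; apply: (le_trans _ ag); apply/ltW; near: b; exact: nbhs_left_lt.
by near=> b; apply/negbTE; rewrite -ltNge; near: b; exact: nbhs_left_gt.
Unshelve. all: by end_near.
Qed.

Lemma near_right_le (a g : R) : \forall b \near a^'+, (b <= g) = (a < g).
Proof.
have [ag|ga] := ltP a g.
  by near=> b; apply/ltW; near: b; exact: nbhs_right_lt.
near=> b; apply/negbTE; rewrite -ltNge.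
by apply: le_lt_trans ga _; near: b; exact: nbhs_right_gt.
Unshelve. all: by end_near.
Qed.

Lemma near_le (a g : R) : a != g -> \forall b \near a, (b <= g) = (a <= g).
Proof.
rewrite neq_lt => /orP[ag|ga].
  by rewrite (ltW ag); near=> b; apply/ltW; near: b; exact: lt_nbhsl.
rewrite leNgt ga; near=> b; apply/negbTE; rewrite -ltNge.
by near: b; exact: lt_nbhsr.
Unshelve. all: by end_near.
Qed.

End real_line.

Section inf_real.
Variable R : realType.
Implicit Types (E : set R) (c : R).

Lemma has_inf_scale E c : 0 < c -> has_inf E -> has_inf [set x | E (x / c)].
Proof.
move=> c_gt0 [[y Ey] [m mE]]; split.
  by exists (c * y); rewrite /= mulrAC divff ?gt_eqF// mul1r.
by exists (c * m) => x /= /mE; rewrite ler_pdivlMr// mulrC.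
Qed.

Lemma inf_scale E c : 0 < c -> inf [set x | E (x / c)] = c * inf E.
Proof.
move=> c_gt0; have [infE|noinfE] := pselect (has_inf E); last first.
  rewrite !inf_out ?mulr0// => infEc; apply: noinfE.
  have cV_gt0 : 0 < c^-1 by rewrite invr_gt0.
  have := has_inf_scale cV_gt0 infEc.
  by congr has_inf; apply/funext => x /=; rewrite invrK mulfK ?gt_eqF.
have [Ec_neq0 Ec_lb] := has_inf_scale c_gt0 infE.
apply/eqP; rewrite eq_le; apply/andP; split.
- rewrite -ler_pdivrMl//; apply: lb_le_inf infE.1 _ => y Ey.
  rewrite ler_pdivrMl//; apply: (ge_inf Ec_lb).
  by rewrite /= mulrAC divff ?gt_eqF// mul1r.
- apply: lb_le_inf Ec_neq0 _ => x Ex; rewrite -ler_pdivlMl// mulrC.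
  by have [_ E_lb] := infE; apply: (ge_inf E_lb).
Qed.

Lemma inf_ge_level_cvg (G : R -> R) a : (forall x y, x < y -> G x < G y) ->
  (exists x, G x < a) -> (exists x, a <= G x) ->
  inf [set x | b <= G x] @[b --> a] --> inf [set x | a <= G x].
Proof.
move=> G_lt [x0 Gx0] [x1 Gx1]; apply/cvgrPdist_le => e e_gt0.
have infa : has_inf [set x | a <= G x].
  split; first by exists x1.
  exists x0 => y /= ay; rewrite leNgt; apply: contraTN ay.
  by move=> /G_lt/lt_trans/(_ Gx0); rewrite -ltNge.
set m := inf [set x | a <= G x].
have Gme_lt : G (m - e) < a.
  by rewrite ltNge; apply/negP => /(ge_inf infa.2); rewrite -/m; lra.
have a_lt_Gme : a < G (m + e).
  have [y ay ym] := inf_adherent e_gt0 infa.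
  exact: le_lt_trans ay (G_lt _ _ ym).
near=> b.
have [Gmeb bGme] : G (m - e) < b /\ b < G (m + e).
  by split; near: b; [exact: lt_nbhsr|exact: lt_nbhsl].
have lbb : lbound [set x | b <= G x] (m - e).
  move=> y /= bGy; rewrite leNgt; apply/negP => /G_lt/lt_trans/(_ Gmeb).
  by rewrite ltNge bGy.
have : m - e <= inf [set x | b <= G x].
  by apply: lb_le_inf lbb; exists (m + e); exact: ltW.
have : inf [set x | b <= G x] <= m + e.
  by apply: (ge_inf (ex_intro _ _ lbb)); exact: ltW.
by rewrite ler_norml -/m; lra.
Unshelve. all: by end_near.
Qed.

End inf_real.

Section sample_quantile.
Variables (R : realType) (n : nat).
Implicit Types (v : 'I_n -> R) (a b x y : R).

Definition sample_cdf v x : R :=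
  n%:R^-1 * \sum_(i < n) (if v i <= x then 1 else 0).

Definition sample_quantile a v : R := inf [set x | a <= sample_cdf v x].

Lemma sample_cdf_le v u x y :
  (forall i, v i <= x -> u i <= y) -> sample_cdf v x <= sample_cdf u y.
Proof.
move=> vu; rewrite ler_wpM2l ?invr_ge0 ?ler0n//; apply: ler_sum => i _.
by case: ifPn => [/vu ->|_]//; case: ifP.
Qed.

Lemma sample_cdf_grid v x : exists j : 'I_n.+1, sample_cdf v x = j%:R / n%:R.
Proof.
have Nle : (\sum_(i < n) nat_of_bool (v i <= x)%R < n.+1)%N.
  rewrite ltnS -[leqRHS]card_ord -sum1_card.
  by apply: leq_sum => i _; case: (v i <= x).
exists (Ordinal Nle); rewrite mulrC /sample_cdf natr_sum.
by congr (_ * _); apply: eq_bigr => i _; case: ifP.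
Qed.

Lemma inf_sample_cdf_grid (p q : R -> bool) v :
  (forall j : 'I_n.+1, p (j%:R / n%:R) = q (j%:R / n%:R)) ->
  inf [set x | p (sample_cdf v x)] = inf [set x | q (sample_cdf v x)].
Proof.
move=> pq; congr inf; apply/seteqP; split=> x /=.
  by have [j ->] := sample_cdf_grid v x; rewrite pq.
by have [j ->] := sample_cdf_grid v x; rewrite pq.
Qed.

Lemma sample_quantile_left_cont a v :
  sample_quantile b v @[b --> a^'-] --> sample_quantile a v.
Proof.
have grid : \forall b \near a^'-, forall j : 'I_n.+1,
    (b <= j%:R / n%:R) = (a <= j%:R / n%:R).
  by apply: filter_forall => j; exact: near_left_le.
by apply: cvg_near_cst; apply: filterS grid => b; exact: inf_sample_cdf_grid.
Qed.

Lemma sample_quantile_right_cvg a v : cvg (sample_quantile b v @[b --> a^'+]).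
Proof.
have grid : \forall b \near a^'+, forall j : 'I_n.+1,
    (b <= j%:R / n%:R) = (a < j%:R / n%:R).
  by apply: filter_forall => j; exact: near_right_le.
apply: (@cvgP _ _ (inf [set x | a < sample_cdf v x])); apply: cvg_near_cst.
by apply: filterS grid => b; exact: inf_sample_cdf_grid.
Qed.

Lemma sample_quantile_near_cst a v : (forall j : 'I_n.+1, a != j%:R / n%:R) ->
  \forall b \near a, sample_quantile b v = sample_quantile a v.
Proof.
move=> a_off_grid; have grid : \forall b \near a, forall j : 'I_n.+1,
    (b <= j%:R / n%:R) = (a <= j%:R / n%:R).
  apply: (@filter_forall R 'I_n.+1 _ (nbhs a)) => j.
  exact: near_le (a_off_grid j).
by apply: filterS grid => b; exact: inf_sample_cdf_grid.
Qed.

Hypothesis n_gt0 : (0 < n)%N.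

Lemma has_inf_sample_cdf_ge a v : 0 < a <= 1 ->
  has_inf [set x | a <= sample_cdf v x].
Proof.
move=> /andP[a_gt0 a_le1]; pose M := \sum_(i < n) `|v i|.
have vM i : `|v i| <= M by rewrite /M (bigD1 i)//= lerDl sumr_ge0.
split.
  exists M; rewrite /= /sample_cdf.
  under eq_bigr => i _ do rewrite (le_trans (ler_norm _) (vM i)).
  by rewrite sumr_const card_ord mulVf ?pnatr_eq0 -?lt0n.
exists (- M) => x /= ax; rewrite leNgt; apply/negP => xM.
suff cdf0 : sample_cdf v x = 0 by move: ax; rewrite cdf0; lra.
rewrite /sample_cdf big1 ?mulr0// => i _; rewrite leNgt (lt_le_trans xM)//.
by rewrite lerNl (le_trans _ (vM i))// -normrN ler_norm.
Qed.

Lemma sample_quantile_cvg a T (F : set_system T) {FF : Filter F}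
  (vs : T -> 'I_n -> R) v : 0 < a <= 1 ->
  (forall i, vs^~ i @ F --> v i) ->
  sample_quantile a (vs s) @[s --> F] --> sample_quantile a v.
Proof.
move=> a01 vs_cvg; apply/cvgrPdist_le => e e_gt0.
have [_ v_lb] := has_inf_sample_cdf_ge v a01.
have e2_gt0 : 0 < e / 2 by rewrite divr_gt0.
have [x ax xq] := inf_adherent e2_gt0 (has_inf_sample_cdf_ge v a01).
have below : ~ a <= sample_cdf v (sample_quantile a v - e / 2).
  by move/(ge_inf v_lb); rewrite /sample_quantile; lra.
near=> s.
have close : forall i, `|v i - vs s i| < e / 2.
  by near: s; apply: filter_forall => i; exact: cvgr_dist_lt.
have [vs_neq0 vs_lb] := has_inf_sample_cdf_ge (vs s) a01.
rewrite ler_norml; apply/andP; split.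
- suff : sample_quantile a (vs s) <= sample_quantile a v + e by lra.
  apply: (ge_inf vs_lb); apply: (le_trans ax); apply: sample_cdf_le => i vix.
  by move: (close i) xq; rewrite ltr_norml => /andP[]; lra.
- suff : sample_quantile a v - e <= sample_quantile a (vs s) by lra.
  apply: lb_le_inf vs_neq0 _ => y /= ay; rewrite leNgt; apply/negP => ylt.
  apply: below.
  apply: (le_trans ay); apply: sample_cdf_le => i viy.
  by move: (close i) ylt; rewrite ltr_norml => /andP[]; lra.
Unshelve. all: by end_near.
Qed.

End sample_quantile.

Section empirical_quantile_paths.
Variables (R : realType) (d : measure_display) (Om : measurableType d).
Variables (Xs : nat -> R -> Om -> R) (n : nat).
Hypothesis n_gt0 : (0 < n)%N.
Variables (w : Om) (a : R).
Hypothesis a01 : 0 < a <= 1.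

Lemma empQ_right_cont t : (forall i, cadlag_paths (Xs i)) -> 0 <= t ->
  empQ Xs n a s w @[s --> t^'+] --> empQ Xs n a t w.
Proof.
move=> Xs_cadlag t_ge0; apply: sample_quantile_cvg => // i.
exact: (Xs_cadlag i w).1.
Qed.

Lemma empQ_left_cvg t : (forall i, cadlag_paths (Xs i)) -> 0 < t ->
  cvg (empQ Xs n a s w @[s --> t^'-]).
Proof.
move=> Xs_cadlag t_gt0.
apply: (@cvgP _ _ (sample_quantile a (fun i : 'I_n => lim (Xs i ^~ w @ t^'-)))).
apply: sample_quantile_cvg => // i.
exact: (Xs_cadlag i w).2.
Qed.

Lemma empQ_continuous T : (forall i, continuous_paths (Xs i)) ->
  {within `[0, T], continuous (fun t => empQ Xs n a t w)}.
Proof.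
move=> Xs_cont; apply/subspace_continuousP => t.
rewrite /= in_itv/= => /andP[t_ge0 _].
apply: sample_quantile_cvg => // i.
have /subspace_continuousP/(_ t) := Xs_cont i w.
rewrite /= in_itv/= t_ge0 => /(_ isT); apply: cvg_trans; apply: cvg_app.
by apply: within_subset => s /=; rewrite !in_itv/= => /andP[->].
Qed.

End empirical_quantile_paths.

Section self_similar_quantile.
Variables (R : realType) (d : measure_display) (Om : measurableType d).
Variables (P : probability Om R) (X : R -> Om -> R) (H : R).
Hypothesis X_ss : self_similar P H X.

Lemma distF_scale c t x : 0 < c -> 0 <= t ->
  distF P X (c * t) x = distF P X t (x / c `^ H).
Proof.
move=> c_gt0 t_ge0; have := X_ss c_gt0 (s := [:: (t, x)]).
rewrite /times_nonneg /= t_ge0.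
rewrite /distF /cyl /= => /(_ isT) cyl_eq; congr fine.
under eq_set do rewrite -[_ <= x]andbT; rewrite cyl_eq; congr (P _).
by apply/funext => w /=; rewrite andbT ler_pdivlMr ?powR_gt0// mulrC.
Qed.

Lemma quantile_scale a c t : 0 < c -> 0 <= t ->
  quantile P X a (c * t) = c `^ H * quantile P X a t.
Proof.
move=> c_gt0 t_ge0; rewrite /quantile -inf_scale ?powR_gt0//; congr inf.
by apply/funext => x /=; rewrite distF_scale.
Qed.

Hypothesis H_gt0 : 0 < H.

Lemma quantile_powR a t : 0 <= t -> quantile P X a t = t `^ H * quantile P X a 1.
Proof.
rewrite le_eqVlt => /orP[/eqP<-|t_gt0]; last by rewrite -quantile_scale ?mulr1.
(* At t = 0, scaling by c := 2^(1/H) gives tau_a(0) = 2 tau_a(0). *)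
pose c : R := 2 `^ H^-1.
have cH : c `^ H = 2 by rewrite -powRrM mulVf ?gt_eqF// powRr1.
have := quantile_scale a (powR_gt0 H^-1 (ltr0Sn _ 1) : 0 < c) (lexx 0).
by rewrite mulr0 cH powR0 ?gt_eqF// mul0r; lra.
Qed.

End self_similar_quantile.

Section positive_integral.
Variables (R : realType) (d : measure_display) (T : measurableType d).
Variable mu : {measure set T -> \bar R}.

Lemma integral_gt0 (D : set T) (f : T -> R) :
  measurable D -> measurable_fun D f ->
  (forall x, D x -> 0 < f x) -> (0 < mu D)%E ->
  (0 < \int[mu]_(x in D) (f x)%:E)%E.
Proof.
move=> mD mf f_gt0 muD_gt0.
rewrite lt0e integral_ge0 ?andbT; last by move=> x Dx; rewrite lee_fin ltW ?f_gt0.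
apply: contraTneq muD_gt0 => int0; rewrite -leNgt.
have int_abs0 : (\int[mu]_(x in D) `|(f x)%:E| = 0)%E.
  rewrite -int0; apply: eq_integral => x /[!inE] Dx.
  by rewrite gee0_abs// lee_fin ltW ?f_gt0.
have mfE : measurable_fun D (fun x => (f x)%:E) by apply/measurable_EFinP.
have [N [mN muN0 DN]] := (ae_eq_integral_abs mu mD mfE).1 int_abs0.
rewrite -muN0 le_measure ?inE// => x Dx; apply: DN => /(_ Dx) [] /eqP.
by rewrite gt_eqF ?f_gt0.
Qed.

End positive_integral.

Section distribution_function.
Variables (R : realType) (d : measure_display) (Om : measurableType d).
Variable P : probability Om R.

Lemma cdfE (Y : {RV P >-> R}) x : cdf Y x = P [set w | Y w <= x].
Proof. by congr (P _); apply/funext => w /=; rewrite in_itv. Qed.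

Variable X : R -> Om -> R.
Hypothesis X1_measurable : measurable_fun setT (X 1).

Let X1 : {RV P >-> R} := mfun_Sub (mem_set X1_measurable).

Lemma distF1_cdf x : distF P X 1 x = fine (cdf X1 x).
Proof. by rewrite cdfE. Qed.

Lemma distF1_lt a : 0 < a -> exists x, distF P X 1 x < a.
Proof.
move=> a_gt0; have cdf_lt : \forall x \near -oo, fine (cdf X1 x) < a.
  exact: (cvgr_lt _ (fine_cvg (cvg_cdfNy0 X1))).
by have [x] := filter_ex cdf_lt; exists x; rewrite distF1_cdf.
Qed.

Lemma distF1_gt a : a < 1 -> exists x, a < distF P X 1 x.
Proof.
move=> a_lt1; have cdf_gt : \forall x \near +oo, a < fine (cdf X1 x).
  exact: (cvgr_gt _ (fine_cvg (cvg_cdfy1 X1))).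
by have [x] := filter_ex cdf_gt; exists x; rewrite distF1_cdf.
Qed.

Hypothesis X_density : pos_density_at1 P X.

Lemma distF1_strict_incr x y : x < y -> distF P X 1 x < distF P X 1 y.
Proof.
move: X_density => [f [mf [f_gt0 Pf]]] xy.
have mfE : measurable_fun setT (EFin \o f) by apply/measurable_EFinP.
pose I (A : set R) := (\int[lebesgue_measure]_(z in A) (f z)%:E)%E.
have Py : P [set w | X 1 w <= y] =
    (I `]-oo, x]%classic + I `]x, y]%classic)%E.
  rewrite Pf (itv_bndbnd_setU (x := BRight x)) ?bnd_simp ?ltW//.
  rewrite ge0_integral_setU//; first exact: measurable_funTS mfE.
    by move=> z _; rewrite lee_fin ltW.
  apply/disj_setPS => z [/=]; rewrite !in_itv/= => zx /andP[/(le_lt_trans zx)].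
  by rewrite ltxx.
have : P [set w | X 1 w <= y] \is a fin_num.
  by rewrite -(cdfE X1) fin_num_measure.
rewrite Py fin_numD => /andP[Ix_fin Ixy_fin].
rewrite /distF Py (fineD Ix_fin Ixy_fin) Pf ltrDl fine_gt0// ltey_eq Ixy_fin andbT.
apply: integral_gt0 => //; first exact: measurable_funTS mf.
by rewrite [X in (_ < X)%E]lebesgue_measure_itv/= lte_fin xy -EFinD lte_fin subr_gt0.
Qed.

Lemma quantile1_cvg (a : R) : 0 < a < 1 ->
  quantile P X b 1 @[b --> a] --> quantile P X a 1.
Proof.
move=> /andP[a_gt0 a_lt1]; apply: inf_ge_level_cvg distF1_strict_incr _ _.
- exact: distF1_lt.
- by have [x ax] := distF1_gt a_lt1; exists x; exact: ltW.
Qed.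

End distribution_function.

Section sup_over_rationals.
Variables (R : realType) (d0 : measure_display) (Om0 : measurableType d0).
Variables (P0 : probability Om0 R) (X : R -> Om0 -> R).
Variables (d : measure_display) (Om : measurableType d) (Xs : nat -> R -> Om -> R).
Variables (n : nat) (H T astar : R) (w : Om).
Hypotheses (n_gt0 : (0 < n)%N) (H_gt0 : 0 < H).
Hypotheses (astar_gt : 1 / 2 < astar) (astar_lt1 : astar < 1).
Hypotheses (X_ss : self_similar P0 H X) (X1_measurable : measurable_fun setT (X 1))
  (X_density : pos_density_at1 P0 X) (Xs_cadlag : forall i, cadlag_paths (Xs i)).

Let err (a t : R) := `|empQ Xs n a t w - quantile P0 X a t|.

Lemma err_right_cont (a t : R) : 0 < a <= 1 -> 0 <= t ->
  err a s @[s --> t^'+] --> err a t.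
Proof.
move=> a01 t_ge0; apply: cvg_norm; apply: cvgB; first exact: empQ_right_cont.
have q_powR : \forall s \near t^'+, s `^ H * quantile P0 X a 1 = quantile P0 X a s.
  near=> s; rewrite [RHS](quantile_powR X_ss H_gt0)//; apply: (le_trans t_ge0).
  by apply/ltW; near: s; exact: nbhs_right_gt.
apply: cvg_trans (near_eq_cvg q_powR) _.
rewrite [quantile P0 X a t](quantile_powR X_ss H_gt0)//.
exact: cvgM (powR_cvg_right H_gt0 t_ge0) (cvg_cst _).
Unshelve. all: by end_near.
Qed.

Lemma err_level_cont (a t : R) : 0 < a < 1 -> ~ is_rat a -> 0 <= t ->
  err b t @[b --> a] --> err a t.
Proof.
move=> a01 a_irr t_ge0; apply: cvg_norm; apply: cvgB.
  apply: cvg_near_cst; apply: sample_quantile_near_cst => j; apply/eqP => a_grid.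
  by apply: a_irr; rewrite a_grid; exact: is_rat_ratio.
rewrite (quantile_powR X_ss H_gt0)//.
under eq_fun do rewrite (quantile_powR X_ss H_gt0)//.
by apply: cvgM; [exact: cvg_cst|exact: quantile1_cvg].
Qed.

Lemma err_approx (a t e : R) :
  1 - astar <= a <= astar -> 0 <= t <= T -> 0 < e ->
  exists t' a', ((0 <= t' <= T /\ is_rat t') \/ t' = T) /\
    ((1 - astar <= a' <= astar) /\ is_rat a') /\ err a t - e <= err a' t'.
Proof.
move=> a_A /andP[t_ge0 t_le_T] e_gt0; have /andP[a_lo a_hi] := a_A.
have a01 : 0 < a < 1 by rewrite (lt_le_trans _ a_lo) ?(le_lt_trans a_hi)// subr_gt0.
have e2_gt0 : 0 < e / 2 by lra.
have [t' [TQt' t'_ge0 err_t']] : exists t',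
    [/\ (0 <= t' <= T /\ is_rat t') \/ t' = T, 0 <= t' & err a t - e / 2 <= err a t'].
  have [->|t_neq_T] := eqVneq t T; first by exists T; split; [right|lra|lra].
  have t_lt_T : t < T by rewrite lt_neqAle t_neq_T.
  have a_le1 : 0 < a <= 1 by case/andP: a01 => -> /ltW.
  have near_t : \forall s \near t^'+,
      [/\ t < s, s <= T & `|err a t - err a s| <= e / 2].
    near=> s; split; first by near: s; exact: nbhs_right_gt.
      by apply/ltW; near: s; exact: nbhs_right_lt.
    by near: s; exact: cvgr_dist_le _ _ (err_right_cont a_le1 t_ge0) _ e2_gt0.
  have [q [tq [_ qT err_q]]] := near_right_rat near_t.
  have q_ge0 : 0 <= ratr q :> R by rewrite (le_trans t_ge0)// ltW.
  exists (ratr q); split=> //; first by left; split; [rewrite q_ge0 qT|exists q].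
  by move: err_q; rewrite ler_norml => /andP[]; lra.
have [a' [Aa' err_a']] : exists a', ((1 - astar <= a' <= astar) /\ is_rat a') /\
    err a t' - e / 2 <= err a' t'.
  have [a_rat|a_irr] := pselect (is_rat a); first by exists a; split; [|lra].
  have near_a : \forall b \near a, `|err a t' - err b t'| <= e / 2.
    exact: cvgr_dist_le _ _ (err_level_cont a01 a_irr t'_ge0) _ e2_gt0.
  have A_ne : 1 - astar < astar by move: astar_gt; lra.
  have [q [Aq err_q]] := near_rat_itv A_ne a_A near_a.
  exists (ratr q); split; first by split; [|exists q].
  by move: err_q; rewrite ler_norml => /andP[]; lra.
by exists t', a'; do 2!split=> //; lra.
Unshelve. all: by end_near.
Qed.

Hypothesis T_ge0 : 0 <= T.

Lemma ereal_sup_err_rat :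
  ereal_sup [set (`|empQ Xs n a t w - quantile P0 X a t|)%:E
    | t in [set t : R | 0 <= t <= T] & a in [set a : R | 1 - astar <= a <= astar]]
  = ereal_sup [set (`|empQ Xs n a t w - quantile P0 X a t|)%:E
    | t in [set t : R | (0 <= t <= T /\ is_rat t) \/ t = T]
    & a in [set a | [set a : R | 1 - astar <= a <= astar] a /\ is_rat a]].
Proof.
apply/eqP; rewrite eq_le; apply/andP; split.
- apply: ge_ereal_sup => _ [t t_T [a a_A <-]]; apply/lee_subgt0Pr => e e_gt0.
  have [t' [a' [t'_TQ [a'_AQ err_le]]]] := err_approx a_A t_T e_gt0.
  rewrite -EFinB; apply: (@le_trans _ _ (err a' t')%:E); first by rewrite lee_fin.
  by apply: ereal_sup_ubound; exists t' => //; exists a'.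
- apply: ereal_sup_le => _ [t t_TQ [a [a_A _] <-]]; exists t; last by exists a.
  by case: t_TQ => [[]//|->] /=; rewrite lexx T_ge0.
Qed.

End sup_over_rationals.

Unset Implicit Arguments.

Theorem lemma3 (R : realType) (d0 d : measure_display)
  (Om0 : measurableType d0) (P0 : probability Om0 R) (X : R -> Om0 -> R)
  (Om : measurableType d) (P : probability Om R) (Xs : nat -> R -> Om -> R)
  (H T astar : R) :
  0 < H -> 0 < T -> 1 / 2 < astar < 1 ->
  is_process X -> self_similar P0 H X -> cadlag_paths X ->
  pos_density_at1 P0 X ->
  measure_is_complete P ->
  (forall i, is_process (Xs i)) -> (forall i, same_fdd P0 X P (Xs i)) ->
  indep_processes P Xs -> (forall i, cadlag_paths (Xs i)) ->
  let A := [set a : R | 1 - astar <= a <= astar] in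
  let AQ := [set a | A a /\ is_rat a] in
  let TQ := [set t : R | (0 <= t <= T /\ is_rat t) \/ t = T] in
  forall n : nat, (0 < n)%N ->
  [/\ {ae P, forall w, forall alpha, 0 < alpha < 1 ->
          forall t, 0 <= t < T ->
          empQ Xs n alpha s w @[s --> t^'+] --> empQ Xs n alpha t w},
      P [set w |
           ereal_sup [set (`|empQ Xs n alpha t w - quantile P0 X alpha t|)%:E
                      | t in [set t : R | 0 <= t <= T] & alpha in A]%classic
         = ereal_sup [set (`|empQ Xs n alpha t w - quantile P0 X alpha t|)%:E
                      | t in TQ & alpha in AQ]%classic] = 1%E,
      {ae P, forall w, forall alpha, 0 < alpha < 1 ->
          forall t, 0 < t <= T -> cvg (empQ Xs n alpha s w @[s --> t^'-])},
      (continuous_paths X -> (forall i, continuous_paths (Xs i)) ->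
       {ae P, forall w, forall alpha, 0 < alpha < 1 ->
          {within `[0, T], continuous (fun t => empQ Xs n alpha t w)}})
    & forall t, 0 <= t <= T ->
      {ae P, forall w, forall alpha, 0 < alpha < 1 ->
          empQ Xs n b t w @[b --> alpha^'-] --> empQ Xs n alpha t w /\
          cvg (empQ Xs n b t w @[b --> alpha^'+])}].
Proof.
move=> H_gt0 T_gt0 /andP[astar_gt astar_lt1] X_process X_ss _ X_density.
move=> _ _ _ _ Xs_cadlag A AQ TQ n n_gt0.
have X1_measurable : measurable_fun setT (X 1) := X_process 1 ler01.
have level01 (alpha : R) : 0 < alpha < 1 -> 0 < alpha <= 1 by case/andP => -> /ltW.
split.
- apply: aeW => w alpha /level01 alpha01 t /andP[t_ge0 _].
  exact: empQ_right_cont.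
- rewrite -(probability_setT P); congr (P _); apply/seteqP; split=> // w _.
  by apply: (ereal_sup_err_rat (H := H)) => //; exact: ltW.
- apply: aeW => w alpha /level01 alpha01 t /andP[t_gt0 _].
  exact: empQ_left_cvg.
- move=> _ Xs_cont; apply: aeW => w alpha /level01 alpha01.
  exact: empQ_continuous.
- move=> t _; apply: aeW => w alpha _.
  by split; [exact: sample_quantile_left_cont|exact: sample_quantile_right_cvg].
Qed.
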